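(* Let $\sigma=(\beta_1,\dots,\beta_M)$ be an arbitrary strategy, $\{\mathcal{I}_N\}$ an arbitrary sequence of instances of the non-binary voting game, and $\Sigma_N$ the symmetric profile in $\mathcal{I}_N$ in which every agent plays $\sigma$. Let $f_{w\mathbf{A}}=\sum_{m=1}^MP_{mw}\beta_m-\mu$, $f_{w\mathbf{R}}=\sum_{m=1}^MP_{mw}(1-\beta_m)-(1-\mu)$ and $f=\min(\min_{w\in\mathcal{H}}f_{w\mathbf{A}},\min_{w\in\mathcal{L}}f_{w\mathbf{R}})$. (i) If $f>0$, there exists a constant $N_0>0$ such that $A(\Sigma_N)\ge1-2\exp(-\tfrac12f^2N)$ for all $N>N_0$. (ii) If $f\le0$, there exist constants $N_0>0$ and $\eta'>0$ such that $A(\Sigma_N)\le1-\eta'$ for all $N>N_0$.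
   Context: Non-binary voting game. $N$ agents each vote for $\mathbf{A}$ or $\mathbf{R}$. World state $W\in\{1,\dots,\mathcal{W}\}$ (unobserved), prior $P_w>0$. Conditional on $W$, each agent independently receives a signal $S_n\in\{1,\dots,M\}$ with $P_{mw}=\Pr[S_n=m\mid W=w]$, satisfying stochastic dominance. Threshold $\mu\in(0,1)$: $\mathbf{A}$ wins iff at least $\mu N$ agents vote $\mathbf{A}$, else $\mathbf{R}$. Agents have utilities with $v_n(w,\mathbf{A})$ strictly increasing and $v_n(w,\mathbf{R})$ strictly decreasing in $w$. Constants $\alpha^{\mathbf{A}}_w$, $\alpha^{\mathbf{R}}_w=1-\alpha^{\mathbf{A}}_w$ independent of $N$: exactly $\lfloor\alpha^{\mathbf{R}}_wN\rfloor$ agents prefer $\mathbf{R}$ in state $w$; $\alpha^{\mathbf{A}}_w\ne\mu$. Informed majority decision in $w$: $\mathbf{A}$ if $\alpha^{\mathbf{A}}_w>\mu$, else $\mathbf{R}$. $\mathcal{L}=\{w:\alpha^{\mathbf{A}}_w<\mu\}$, $\mathcal{H}=\{w:\alpha^{\mathbf{A}}_w>\mu\}$, both nonempty. A sequence of instances: $\mathcal{I}_N$ has $N$ agents, all share $\mu$, $(P_w)$, $(P_{mw})$, $(\alpha^{\mathbf{A}}_w)$. Strategy $(\beta_1,\dots,\beta_M)$: $\beta_m$ = probability of voting $\mathbf{A}$ on signal $m$. $\lambda^{\mathbf{X}}_w(\Sigma)$: ex-ante probability that $\mathbf{X}$ wins in state $w$. Fidelity $A(\Sigma)=\sum_{w\in\mathcal{L}}P_w\lambda^{\mathbf{R}}_w(\Sigma)+\sum_{w\in\mathcal{H}}P_w\lambda^{\mathbf{A}}_w(\Sigma)$.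 *)

From HB Require Import structures.
From mathcomp Require Import all_boot all_order all_algebra.
From mathcomp Require Import all_classical all_reals all_analysis.
Set Implicit Arguments. Unset Strict Implicit. Unset Printing Implicit Defensive.
Import Order.TTheory GRing.Theory Num.Theory.
Local Open Scope ring_scope.

Section Voting.
Variables (R : realType) (W M : nat).
(* Psig m w = Pr[S_n = m | W = w]; beta m = Pr[vote A | signal m]; mu = threshold *)
Variables (Psig : 'I_M -> 'I_W -> R) (beta : 'I_M -> R) (mu : R).

(* number of A votes in a vote profile (true = A) *)
Definition nA N (v : {ffun 'I_N -> bool}) : nat := #|[set n | v n]|.

(* ex-ante probability (over signal profiles s and vote profiles v, agents
   independent given the state) of the vote profile, conditional on state w *)
Definition profile_prob N (w : 'I_W) (s : {ffun 'I_N -> 'I_M})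
    (v : {ffun 'I_N -> bool}) : R :=
  \prod_(n < N) (Psig (s n) w * (if v n then beta (s n) else 1 - beta (s n))).

Definition lamA N (w : 'I_W) : R :=
  \sum_(s : {ffun 'I_N -> 'I_M}) \sum_(v : {ffun 'I_N -> bool})
     (if mu * N%:R <= (nA v)%:R then profile_prob w s v else 0).

Definition lamR N (w : 'I_W) : R :=
  \sum_(s : {ffun 'I_N -> 'I_M}) \sum_(v : {ffun 'I_N -> bool})
     (if (nA v)%:R < mu * N%:R then profile_prob w s v else 0).

(* fidelity A(Sigma_N); L = {w | alphaA w < mu}, H = {w | alphaA w > mu} *)
Definition fidelity (P : 'I_W -> R) (alphaA : 'I_W -> R) N : R :=
  \sum_(w < W | alphaA w < mu) P w * lamR N w
  + \sum_(w < W | mu < alphaA w) P w * lamA N w.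

Definition fA (w : 'I_W) : R := \sum_(m < M) Psig m w * beta m - mu.
Definition fR (w : 'I_W) : R := \sum_(m < M) Psig m w * (1 - beta m) - (1 - mu).
End Voting.

From HB Require Import structures.
From mathcomp Require Import all_boot all_order all_algebra.
From mathcomp Require Import all_classical all_reals all_analysis.
From mathcomp Require Import ring lra.
Set Implicit Arguments. Unset Strict Implicit. Unset Printing Implicit Defensive.
Import Order.TTheory GRing.Theory Num.Theory.
Local Open Scope ring_scope.

(* In the symmetric profile every agent votes A independently with probability
   p_w = \sum_m P_mw beta_m, so the number of A votes in state w is binomial(N, p_w)
   and the fidelity equals 1 - \sum_w P_w e_w(N), where e_w(N) is the probability
   that the wrong alternative wins in state w.
   If f > 0, every p_w lies at distance at least f from mu on the side of the
   correct alternative, and a Chernoff bound gives e_w(N) <= exp(-f^2 N / 2).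
   If f <= 0, some p_w lies on the wrong side of mu or on mu itself.  Once the
   variance N p_w (1 - p_w) is at least 1, the binomial falls strictly on the wrong
   side of its mean with probability at least 2/25, by the second and fourth central
   moments and a quartic minorant of an indicator; if p_w is 0 or 1 the wrong outcome
   is certain.  Either way a mass 2/25 P_w is lost for all large N. *)

Lemma nAE N (v : {ffun 'I_N -> bool}) : nA v = (\sum_(n < N) v n)%N.
Proof. by rewrite /nA -sum1_card big_mkcond; apply: eq_bigr => n _; rewrite inE. Qed.

Lemma nA_le N (v : {ffun 'I_N -> bool}) : (nA v <= N)%N.
Proof. by rewrite /nA -[X in (_ <= X)%N]card_ord max_card. Qed.

Definition ffun_cons {N} (b : bool) (u : {ffun 'I_N -> bool}) : {ffun 'I_N.+1 -> bool} :=
  [ffun i => oapp u b (unlift ord0 i)].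

Lemma sum_ffunS (V : nmodType) N (F : {ffun 'I_N.+1 -> bool} -> V) :
  \sum_v F v = \sum_u F (ffun_cons false u) + \sum_u F (ffun_cons true u).
Proof.
pose split_ffun (v : {ffun 'I_N.+1 -> bool}) := (v ord0, [ffun j => v (lift ord0 j)]).
have consK : cancel (fun bu => ffun_cons bu.1 bu.2) split_ffun.
  by move=> [b u]; rewrite /split_ffun /ffun_cons ffunE unlift_none;
     congr pair; apply/ffunP => j; rewrite !ffunE liftK.
have splitK : cancel split_ffun (fun bu => ffun_cons bu.1 bu.2).
  move=> v; apply/ffunP => i; rewrite /ffun_cons ffunE /=.
  by case: (unliftP ord0 i) => [j ->|->] /=; rewrite ?ffunE.
rewrite (reindex (fun bu => ffun_cons bu.1 bu.2)) /=; last by exists split_ffun.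
by rewrite -(pair_bigA _ (fun b u => F (ffun_cons b u))) big_bool addrC.
Qed.

Lemma ffun_cons0 N b (u : {ffun 'I_N -> bool}) : ffun_cons b u ord0 = b.
Proof. by rewrite ffunE unlift_none. Qed.

Lemma ffun_consS N b (u : {ffun 'I_N -> bool}) j : ffun_cons b u (lift ord0 j) = u j.
Proof. by rewrite ffunE liftK. Qed.

Lemma prod_ffun_cons (V : pzSemiRingType) N (G : bool -> V) b (u : {ffun 'I_N -> bool}) :
  \prod_(n < N.+1) G (ffun_cons b u n) = G b * \prod_(n < N) G (u n).
Proof.
by rewrite big_ord_recl ffun_cons0; congr (_ * _); apply: eq_bigr => j _; rewrite ffun_consS.
Qed.

Lemma nA_ffun_cons N b (u : {ffun 'I_N -> bool}) : nA (ffun_cons b u) = (b + nA u)%N.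
Proof.
by rewrite !nAE big_ord_recl ffun_cons0; congr (_ + _)%N; apply: eq_bigr => j _; rewrite ffun_consS.
Qed.

Section BinomialExpectation.
Variable R : realType.
Implicit Types (a c p t : R) (N : nat) (phi psi : nat -> R).

Definition Ebin p N phi : R :=
  \sum_(v : {ffun 'I_N -> bool})
    (\prod_(n < N) (if v n then p else 1 - p)) * phi (nA v).

Lemma Ebin0 p phi : Ebin p 0 phi = phi 0%N.
Proof.
rewrite /Ebin (big_pred1 [ffun=> false]); last first.
  by move=> v /=; symmetry; apply/eqP/ffunP => -[].
by rewrite big_ord0 mul1r nAE big_ord0.
Qed.

Lemma EbinS p N phi :
  Ebin p N.+1 phi = (1 - p) * Ebin p N phi + p * Ebin p N (fun k => phi k.+1).
Proof.
rewrite /Ebin sum_ffunS !mulr_sumr.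
by congr (_ + _); apply: eq_bigr => u _;
  rewrite (prod_ffun_cons (fun b => if b then p else 1 - p)) nA_ffun_cons mulrA.
Qed.

Lemma eq_Ebin_in p N phi psi : (forall k, (k <= N)%N -> phi k = psi k) ->
  Ebin p N phi = Ebin p N psi.
Proof. by move=> eq_phi; apply: eq_bigr => v _; rewrite eq_phi ?nA_le. Qed.

Lemma eq_Ebin p N phi psi : phi =1 psi -> Ebin p N phi = Ebin p N psi.
Proof. by move=> eq_phi; apply: eq_Ebin_in => k _. Qed.

Lemma EbinD p N phi psi :
  Ebin p N (fun k => phi k + psi k) = Ebin p N phi + Ebin p N psi.
Proof. by rewrite /Ebin -big_split; apply: eq_bigr => v _; rewrite mulrDr. Qed.

Lemma EbinB p N phi psi :
  Ebin p N (fun k => phi k - psi k) = Ebin p N phi - Ebin p N psi.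
Proof. by rewrite /Ebin -sumrB; apply: eq_bigr => v _; rewrite mulrBr. Qed.

Lemma EbinZ p N a phi : Ebin p N (fun k => a * phi k) = a * Ebin p N phi.
Proof. by rewrite /Ebin mulr_sumr; apply: eq_bigr => v _; rewrite mulrCA. Qed.

Lemma Ebin_sum p N n (F : 'I_n -> nat -> R) :
  Ebin p N (fun k => \sum_(i < n) F i k) = \sum_(i < n) Ebin p N (F i).
Proof.
rewrite /Ebin exchange_big; apply: eq_bigr => v _; exact: mulr_sumr.
Qed.

Lemma Ebin_cst p N c : Ebin p N (fun _ => c) = c.
Proof. by elim: N => [|N IH]; rewrite ?Ebin0 // EbinS IH; ring. Qed.

Lemma Ebin_le p N phi psi : 0 <= p <= 1 ->
  (forall k, (k <= N)%N -> phi k <= psi k) -> Ebin p N phi <= Ebin p N psi.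
Proof.
move=> /andP[p0 p1] le_phi; apply: ler_sum => v _.
apply: ler_wpM2l; last exact/le_phi/nA_le.
by apply: prodr_ge0 => n _; case: (v n); lra.
Qed.

Lemma Ebin_p0 N phi : Ebin 0 N phi = phi 0%N.
Proof. by elim: N => [|N IH]; rewrite ?Ebin0 // EbinS IH subr0 mul1r mul0r addr0. Qed.

Lemma Ebin_flip p N phi : Ebin (1 - p) N phi = Ebin p N (fun k => phi (N - k)%N).
Proof.
pose neg (v : {ffun 'I_N -> bool}) := [ffun n => ~~ v n].
have negK : involutive neg by move=> v; apply/ffunP => n; rewrite !ffunE negbK.
rewrite /Ebin (reindex_inj (inv_inj negK)); apply: eq_bigr => v _; congr (_ * phi _).
  by apply: eq_bigr => n _; rewrite ffunE; case: (v n); rewrite /= ?subKr.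
apply/eqP; rewrite -(eqn_add2r (nA v)) subnK ?nA_le //; apply/eqP.
rewrite /nA; have -> : [set n | neg v n] = ~: [set n | v n] by apply/setP => n; rewrite !inE ffunE.
by rewrite addnC cardsC card_ord.
Qed.

Lemma Ebin_expR p N t :
  Ebin p N (fun k => expR (t * k%:R)) = (1 - p + p * expR t) ^+ N.
Proof.
elim: N => [|N IH]; first by rewrite Ebin0 mulr0 expR0.
have expS k : expR (t * k.+1%:R) = expR t * expR (t * k%:R).
  by rewrite -expRD -natr1; congr expR; ring.
by rewrite EbinS (eq_Ebin p N expS) EbinZ IH exprS; ring.
Qed.

Definition cmoment p N j := Ebin p N (fun k => (N%:R * p - k%:R) ^+ j).

Lemma cmomentS p N j :
  cmoment p N.+1 j = \sum_(i < j.+1)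
    ((1 - p) * p ^+ (j - i) + p * (p - 1) ^+ (j - i)) * cmoment p N i *+ 'C(j, i).
Proof.
pose Y k := N%:R * p - k%:R.
have Ebin_shift a : Ebin p N (fun k => (a + Y k) ^+ j) =
    \sum_(i < j.+1) a ^+ (j - i) * cmoment p N i *+ 'C(j, i).
  under eq_Ebin do rewrite exprDn.
  rewrite Ebin_sum; apply: eq_bigr => i _.
  by under eq_Ebin do rewrite -mulrnAl; rewrite EbinZ mulrnAl.
have stay k : (N.+1%:R * p - k%:R) ^+ j = (p + Y k) ^+ j.
  by rewrite /Y -natr1; congr (_ ^+ _); ring.
have step k : (N.+1%:R * p - k.+1%:R) ^+ j = ((p - 1) + Y k) ^+ j.
  by rewrite /Y -!natr1; congr (_ ^+ _); ring.
rewrite [cmoment _ N.+1 _]/cmoment EbinS (eq_Ebin _ _ stay) (eq_Ebin _ _ step) !Ebin_shift.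
by rewrite !mulr_sumr -big_split; apply: eq_bigr => i _ /=; ring.
Qed.

Lemma cmoment0 p N : cmoment p N 0 = 1.
Proof. exact: Ebin_cst. Qed.

Lemma cmoment1 p N : cmoment p N 1 = 0.
Proof.
elim: N => [|N IH]; first by rewrite /cmoment Ebin0 mul0r subr0.
by rewrite cmomentS !big_ord_recr big_ord0 /= IH cmoment0; ring.
Qed.

Lemma cmoment2 p N : cmoment p N 2 = N%:R * (p * (1 - p)).
Proof.
elim: N => [|N IH]; first by rewrite /cmoment Ebin0 mul0r subr0 expr0n /=; ring.
rewrite cmomentS !big_ord_recr big_ord0 /= IH cmoment1 cmoment0 -natr1.
by rewrite !bin0 bin1 binn; ring.
Qed.

Lemma cmoment4 p N : cmoment p N 4 =
  N%:R * (p * (1 - p)) * (1 - 6 * (p * (1 - p))) + 3 * (N%:R * (p * (1 - p))) ^+ 2.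
Proof.
elim: N => [|N IH]; first by rewrite /cmoment Ebin0 mul0r subr0 expr0n /=; ring.
rewrite cmomentS !big_ord_recr big_ord0 /= IH cmoment2 cmoment1 cmoment0 -natr1.
by rewrite !bin0 bin1 binn (_ : 'C(4, 2) = 6)%N // (_ : 'C(4, 3) = 4)%N //; ring.
Qed.

End BinomialExpectation.

Section BinomialTails.
Variable R : realType.
Implicit Types (f p x : R) (N : nat).

Lemma expR_ge_taylor2 x : 0 <= x -> 1 + x + x ^+ 2 / 2 <= expR x.
Proof.
move=> x0; have -> : 1 + x + x ^+ 2 / 2 = series (exp_coeff x) 3.
  rewrite /series /exp_coeff /= !big_nat_recr //= big_nil !factS fact0 expr0 expr1.
  by field.
apply: nondecreasing_cvgn_le; last exact: is_cvg_series_exp_coeff.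
apply: (nondecreasing_series (P := xpredT)) => n _ _.
by rewrite /exp_coeff /= divr_ge0 // exprn_ge0.
Qed.

Lemma expRN_le_taylor2 x : 0 <= x -> expR (- x) <= 1 - x + x ^+ 2 / 2.
Proof.
move=> x0; rewrite expRN -div1r ler_pdivrMr ?expR_gt0 //.
have := expR_ge_taylor2 x0; have : 0 <= 1 - x + x ^+ 2 / 2 by nra.
nra.
Qed.

(* 1 - a <= exp (- a) for a = p (1 - exp (- f)) >= (x + f) (f - f^2 / 2) >= f x + f^2 / 2,
   the last step because x + f <= 1. *)
Lemma chernoff_factor_le p x f : 0 < f -> 0 <= x -> x + f <= p <= 1 ->
  (1 - p + p * expR (- f)) * expR (f * x) <= expR (- (f ^+ 2 / 2)).
Proof.
move=> f0 x0 /andP[xfp p1].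
have -> : - (f ^+ 2 / 2) = (- (f * x) - f ^+ 2 / 2) + f * x by ring.
rewrite expRD ler_pM2r ?expR_gt0 //; apply: le_trans (expR_ge1Dx _).
have := expRN_le_taylor2 (ltW f0).
have : expR (- f) <= 1 by rewrite expR_le1 oppr_le0 ltW.
have : 0 <= x + f by lra.
nra.
Qed.

Definition Pbin p N (A : pred nat) : R := Ebin p N (fun k => (A k)%:R).

Lemma Pbin_ge0 p N A : 0 <= p <= 1 -> 0 <= Pbin p N A.
Proof. by move=> p01; rewrite -(Ebin_cst p N 0); apply: Ebin_le => // k _. Qed.

Lemma Pbin_sub p N (A B : pred nat) : 0 <= p <= 1 ->
  (forall k, (k <= N)%N -> A k -> B k) -> Pbin p N A <= Pbin p N B.
Proof. by move=> p01 AB; apply: Ebin_le => // k /AB; case: (A k) => // ->. Qed.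

Lemma PbinC p N A : Pbin p N A + Pbin p N (predC A) = 1.
Proof.
rewrite /Pbin -EbinD -[RHS](Ebin_cst p N 1); apply: eq_Ebin => k /=.
by case: (A k); rewrite ?addr0 ?add0r.
Qed.

Lemma Pbin_upper_flip p x N :
  Pbin p N (fun k => x * N%:R <= k%:R) = Pbin (1 - p) N (fun k => k%:R <= (1 - x) * N%:R).
Proof.
rewrite /Pbin Ebin_flip; apply: eq_Ebin_in => k kN.
by rewrite natrB // mulrBl mul1r lerD2l lerN2.
Qed.

Lemma Pbin_lower_tail p x f N : 0 <= x -> 0 < f -> x + f <= p <= 1 ->
  Pbin p N (fun k => k%:R <= x * N%:R) <= expR (- (1 / 2) * f ^+ 2 * N%:R).
Proof.
move=> x0 f0 hp; have /andP[xfp p1] := hp.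
have p0 : 0 <= p by lra.
have p01 : 0 <= p <= 1 by rewrite p0.
apply: (@le_trans _ _ (Ebin p N (fun k => expR (f * x * N%:R) * expR (- f * k%:R)))).
  apply: Ebin_le => // k _; rewrite -expRD.
  case: (boolP (k%:R <= x * N%:R)) => [kxN|_]; last exact: expR_ge0.
  by rewrite -[1%:R]expR0 ler_expR; nra.
have -> : - (1 / 2) * f ^+ 2 * N%:R = - (f ^+ 2 / 2) * N%:R by ring.
rewrite EbinZ Ebin_expR !expRM_natr -exprMn mulrC.
apply: lerXn2r; rewrite ?nnegrE ?expR_ge0 //; last exact: chernoff_factor_le.
by rewrite mulr_ge0 ?expR_ge0 // addr_ge0 ?mulr_ge0 ?expR_ge0 ?subr_ge0.
Qed.

(* When s^2 = N p (1 - p) >= 1 and y = N p - K, the left side has expectation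
   12 s^4 - E[y^4] >= 8 s^4: this is where the constant 2/25 = 8/100 comes from. *)
Lemma quartic_le_indicator (s y : R) : 0 < s ->
  16 * s ^+ 3 * y + 12 * s ^+ 2 * y ^+ 2 - y ^+ 4 <= 100 * s ^+ 4 * (0 < y)%R%:R.
Proof.
move=> s0; case: (boolP (0 < y)) => y0 /=.
  have sos : 100 * s ^+ 4 * 1 - (16 * s ^+ 3 * y + 12 * s ^+ 2 * y ^+ 2 - y ^+ 4)
      = (y ^+ 2 - 8 * s ^+ 2) ^+ 2 + 4 * (s * (y - 2 * s)) ^+ 2 + 20 * s ^+ 4 by ring.
  rewrite -subr_ge0 sos; have := sqr_ge0 (y ^+ 2 - 8 * s ^+ 2).
  have := sqr_ge0 (s * (y - 2 * s)); have : 0 <= s ^+ 4 by rewrite exprn_ge0 // ltW.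
  lra.
have -> : 16 * s ^+ 3 * y + 12 * s ^+ 2 * y ^+ 2 - y ^+ 4
    = y * ((y + 2 * s) ^+ 2 * (4 * s - y)) by ring.
rewrite -leNgt in y0; rewrite mulr0; apply: mulr_le0_ge0 => //.
by apply: mulr_ge0; [exact: sqr_ge0 | lra].
Qed.

Lemma Pbin_lt_mean p N : 1 <= N%:R * (p * (1 - p)) ->
  2 / 25 <= Pbin p N (fun k => k%:R < N%:R * p).
Proof.
set V := N%:R * (p * (1 - p)) => V1.
have p01 : 0 <= p <= 1.
  have N0 : 0 <= N%:R :> R by [].
  have pq0 : 0 < p * (1 - p) by rewrite /V in V1; nra.
  by apply/andP; split; nra.
have V0 : 0 < V by lra.
pose s := Num.sqrt V; have s0 : 0 < s by rewrite sqrtr_gt0.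
have s2 : s ^+ 2 = V by rewrite sqr_sqrtr // ltW.
have : 16 * s ^+ 3 * cmoment p N 1 + 12 * s ^+ 2 * cmoment p N 2 - cmoment p N 4
    <= 100 * s ^+ 4 * Pbin p N (fun k => k%:R < N%:R * p).
  rewrite /cmoment /Pbin -!EbinZ -EbinD -EbinB; apply: Ebin_le => // k _.
  by rewrite -subr_gt0; exact: quartic_le_indicator.
rewrite cmoment1 cmoment2 cmoment4 -/V (_ : s ^+ 4 = V ^+ 2); last by rewrite -s2 -exprM.
rewrite s2 mulr0 add0r -mulrA -expr2 => bound.
have VV : V <= V ^+ 2 by rewrite expr2 ler_peMl // ltW.
have Vpq : 0 <= V * (p * (1 - p)).
  by case/andP: p01 => p0 p1; apply: mulr_ge0; [exact: ltW | nra].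
have V2 : 0 < 100 * V ^+ 2 by apply: mulr_gt0 => //; apply: exprn_gt0.
rewrite -(ler_pM2l V2); lra.
Qed.

Lemma Pbin_lt_eventually p x : 0 <= p <= x -> 0 < x < 1 ->
  exists N0, forall N, (N0 < N)%N -> 2 / 25 <= Pbin p N (fun k => k%:R < x * N%:R).
Proof.
move=> /andP[p0 px] /andP[x0 x1].
have [<-|p_gt0] := eqVneq 0 p.
  exists 0%N => N N0; rewrite /Pbin Ebin_p0 mulr_gt0 ?ltr0n //=; lra.
have {p_gt0}p_gt0 : 0 < p by rewrite lt_def eq_sym p_gt0.
have q0 : 0 < p * (1 - p) by apply: mulr_gt0; lra.
exists (Num.truncn (p * (1 - p))^-1) => N N0N.
have V1 : 1 <= N%:R * (p * (1 - p)).
  rewrite -ler_pdivrMr // div1r; apply: (le_trans (ltW (truncnS_gt _))).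
  by rewrite ler_nat.
apply: (le_trans (Pbin_lt_mean V1)); apply: Pbin_sub => [|k _]; first lra.
by move=> /lt_le_trans; apply; rewrite mulrC ler_wpM2r.
Qed.

End BinomialTails.

Section Voting.
Variables (R : realType) (W M : nat) (P : 'I_W -> R) (Psig : 'I_M -> 'I_W -> R).
Variables (beta : 'I_M -> R) (mu : R) (alphaA : 'I_W -> R).
Hypothesis hP_pos : forall w, 0 < P w.
Hypothesis hP_sum : \sum_(w < W) P w = 1.
Hypothesis hPsig_nn : forall m w, 0 <= Psig m w.
Hypothesis hPsig_sum : forall w, \sum_(m < M) Psig m w = 1.
Hypothesis hmu : 0 < mu < 1.
Hypothesis halpha_mu : forall w, alphaA w != mu.
Hypothesis hbeta : forall m, 0 <= beta m <= 1.

Definition vote_probA w := \sum_(m < M) Psig m w * beta m.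

Lemma vote_probA_01 w : 0 <= vote_probA w <= 1.
Proof.
apply/andP; split; first by apply: sumr_ge0 => m _; rewrite mulr_ge0 //; case/andP: (hbeta m).
rewrite -(hPsig_sum w); apply: ler_sum => m _; case/andP: (hbeta m) => _ b1.
by rewrite ler_piMr.
Qed.

Lemma fAE w : fA Psig beta mu w = vote_probA w - mu.
Proof. by []. Qed.

Lemma fRE w : fR Psig beta mu w = mu - vote_probA w.
Proof.
rewrite /fR (eq_bigr (fun m => Psig m w - Psig m w * beta m)); last by move=> m _; ring.
by rewrite sumrB hPsig_sum /vote_probA; ring.
Qed.

Lemma sum_profile_probE N w (c : pred nat) :
  \sum_(s : {ffun 'I_N -> 'I_M}) \sum_(v : {ffun 'I_N -> bool})
     (if c (nA v) then profile_prob Psig beta w s v else 0)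
  = Pbin (vote_probA w) N c.
Proof.
rewrite exchange_big; apply: eq_bigr => v _.
case: (c (nA v)); last by rewrite big1 ?mulr0.
rewrite mulr1 /profile_prob.
rewrite -(bigA_distr_bigA (fun n m => Psig m w * (if v n then beta m else 1 - beta m))).
apply: eq_bigr => n _; case: (v n) => //.
by rewrite (eq_bigr (fun m => Psig m w - Psig m w * beta m)) ?sumrB ?hPsig_sum // => m _; ring.
Qed.

Lemma lamAE N w :
  lamA Psig beta mu N w = Pbin (vote_probA w) N (fun k => mu * N%:R <= k%:R).
Proof. exact: sum_profile_probE. Qed.

Lemma lamRE N w :
  lamR Psig beta mu N w = Pbin (vote_probA w) N (fun k => k%:R < mu * N%:R).
Proof. exact: sum_profile_probE. Qed.

Definition lam_wrong N w :=
  if alphaA w < mu then lamA Psig beta mu N w else lamR Psig beta mu N w.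

Lemma lamA_flipE N w : lamA Psig beta mu N w =
  Pbin (1 - vote_probA w) N (fun k => k%:R <= (1 - mu) * N%:R).
Proof. by rewrite lamAE Pbin_upper_flip. Qed.

Lemma mu_lt_alphaAE w : (mu < alphaA w) = ~~ (alphaA w < mu).
Proof. by rewrite -leNgt le_eqVlt eq_sym (negbTE (halpha_mu w)). Qed.

Lemma lam_wrong_ge0 N w : 0 <= lam_wrong N w.
Proof. by rewrite /lam_wrong lamAE lamRE; case: ifP => _; apply/Pbin_ge0/vote_probA_01. Qed.

Lemma fidelityE N :
  fidelity Psig beta mu P alphaA N = 1 - \sum_(w < W) P w * lam_wrong N w.
Proof.
have lamRE' w : lamR Psig beta mu N w = 1 - lamA Psig beta mu N w.
  pose A k := mu * N%:R <= k%:R.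
  rewrite lamAE lamRE; apply: (addrI (Pbin (vote_probA w) N A)).
  rewrite [RHS]addrC subrK -[RHS](PbinC (vote_probA w) N A).
  by congr (_ + Pbin _ _ _); apply/funext => k /=; rewrite ltNge.
rewrite -[1 in RHS]hP_sum -sumrB (bigID (fun w => alphaA w < mu)) /= /fidelity.
congr (_ + _); first by apply: eq_bigr => w Lw; rewrite /lam_wrong Lw lamRE'; ring.
apply: eq_big => [w | w Hw]; first exact: mu_lt_alphaAE.
by rewrite /lam_wrong ltNge (ltW Hw) /= lamRE'; ring.
Qed.

Lemma fidelity_ge N e : (forall w, lam_wrong N w <= e) ->
  1 - e <= fidelity Psig beta mu P alphaA N.
Proof.
move=> le_e; rewrite fidelityE lerD2l lerN2 -[leRHS]mul1r -hP_sum mulr_suml.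
by apply: ler_sum => w _; apply: ler_wpM2l; [exact/ltW | exact: le_e].
Qed.

Lemma fidelity_le N w c : c <= lam_wrong N w ->
  fidelity Psig beta mu P alphaA N <= 1 - P w * c.
Proof.
move=> c_le; rewrite fidelityE lerD2l lerN2 (bigD1 w) //= -[leLHS]addr0 lerD //.
  by rewrite ler_wpM2l // ltW.
by apply: sumr_ge0 => v _; rewrite mulr_ge0 ?lam_wrong_ge0 ?ltW.
Qed.

Lemma lam_wrong_le_expR N w f : 0 < f ->
  (mu < alphaA w -> f <= fA Psig beta mu w) -> (alphaA w < mu -> f <= fR Psig beta mu w) ->
  lam_wrong N w <= expR (- (1 / 2) * f ^+ 2 * N%:R).
Proof.
case/andP: hmu => mu0 mu1 f0 fH fL; have := vote_probA_01 w.
rewrite /lam_wrong; case: ifPn => [Lw|Hw] p01.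
- have := fL Lw; rewrite fRE => pf.
  have x0 : 0 <= 1 - mu by lra.
  have hp : (1 - mu) + f <= 1 - vote_probA w <= 1 by apply/andP; split; lra.
  by rewrite lamA_flipE; exact: Pbin_lower_tail N x0 f0 hp.
- have Hw' : mu < alphaA w by rewrite mu_lt_alphaAE.
  have := fH Hw'; rewrite fAE => pf.
  have hp : mu + f <= vote_probA w <= 1 by apply/andP; split; lra.
  rewrite lamRE; apply: le_trans (Pbin_lower_tail N (ltW mu0) f0 hp).
  by apply: Pbin_sub => // k _ /ltW; rewrite mulrC.
Qed.

Lemma lam_wrong_eventually w :
  (mu < alphaA w /\ fA Psig beta mu w <= 0) \/ (alphaA w < mu /\ fR Psig beta mu w <= 0) ->
  exists N0, forall N, (N0 < N)%N -> 2 / 25 <= lam_wrong N w.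
Proof.
case/andP: hmu => mu0 mu1; have /andP[p0 p1] := vote_probA_01 w.
case=> [[Hw pf]|[Lw pf]]; rewrite /lam_wrong.
- rewrite fAE in pf; have px : 0 <= vote_probA w <= mu by apply/andP; split; lra.
  have [N0 lowN] := Pbin_lt_eventually px hmu.
  by exists N0 => N /lowN; rewrite ltNge (ltW Hw) lamRE.
- rewrite fRE in pf; have px : 0 <= 1 - vote_probA w <= 1 - mu by apply/andP; split; lra.
  have x01 : 0 < 1 - mu < 1 by apply/andP; split; lra.
  have [N0 lowN] := Pbin_lt_eventually px x01.
  exists N0 => N /lowN low; rewrite Lw lamA_flipE; apply: le_trans low _.
  by apply: Pbin_sub => [|k _ /ltW //]; apply/andP; split; lra.
Qed.

End Voting.

Theorem corollary6 (R : realType) (W M : nat)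
  (P : 'I_W -> R) (Psig : 'I_M -> 'I_W -> R) (mu : R) (alphaA : 'I_W -> R)
  (vA vR : forall N : nat, 'I_N -> 'I_W -> R)
  (beta : 'I_M -> R) (f : R)
  (* prior *)
  (hP_pos : forall w, 0 < P w) (hP_sum : \sum_(w < W) P w = 1)
  (* signal distributions *)
  (hPsig_nn : forall m w, 0 <= Psig m w)
  (hPsig_sum : forall w, \sum_(m < M) Psig m w = 1)
  (* first-order stochastic dominance: higher states give higher signals *)
  (hdom : forall (w w' : 'I_W) (k : nat), (w <= w')%N ->
     \sum_(m < M | (k <= m)%N) Psig m w <= \sum_(m < M | (k <= m)%N) Psig m w')
  (* threshold *)
  (hmu : 0 < mu < 1)
  (* utilities of the instances I_N *)
  (hvA : forall N (n : 'I_N) (w w' : 'I_W), (w < w')%N -> vA N n w < vA N n w')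
  (hvR : forall N (n : 'I_N) (w w' : 'I_W), (w < w')%N -> vR N n w' < vR N n w)
  (halpha : forall N (w : 'I_W),
     (#|[set n : 'I_N | vA N n w < vR N n w]|)%:Z = Num.floor ((1 - alphaA w) * N%:R))
  (halpha_mu : forall w, alphaA w != mu)
  (hL : exists w, alphaA w < mu) (hH : exists w, mu < alphaA w)
  (* strategy *)
  (hbeta : forall m, 0 <= beta m <= 1)
  (* f = min (min_{w in H} f_{wA}, min_{w in L} f_{wR}) *)
  (hf_att : (exists2 w, mu < alphaA w & f = fA Psig beta mu w) \/
            (exists2 w, alphaA w < mu & f = fR Psig beta mu w))
  (hf_le : (forall w, mu < alphaA w -> f <= fA Psig beta mu w) /\
           (forall w, alphaA w < mu -> f <= fR Psig beta mu w)) :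
  (0 < f -> exists N0 : nat, (0 < N0)%N /\ forall N : nat, (N0 < N)%N ->
     1 - 2 * expR (- (1 / 2) * f ^+ 2 * N%:R) <= fidelity Psig beta mu P alphaA N) /\
  (f <= 0 -> exists N0 : nat, exists eta : R, (0 < N0)%N /\ 0 < eta /\
     forall N : nat, (N0 < N)%N -> fidelity Psig beta mu P alphaA N <= 1 - eta).
Proof.
split=> [f0 | f_le0].
- exists 1%N; split=> // N _.
  have wrong_le w := lam_wrong_le_expR hPsig_nn hPsig_sum hmu halpha_mu hbeta N f0
    (hf_le.1 w) (hf_le.2 w).
  apply: le_trans (fidelity_ge hP_pos hP_sum hPsig_sum halpha_mu wrong_le).
  by have := expR_ge0 (- (1 / 2) * f ^+ 2 * N%:R); lra.
- have [w w_wrong] : exists w, (mu < alphaA w /\ fA Psig beta mu w <= 0) \/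
                               (alphaA w < mu /\ fR Psig beta mu w <= 0).
    by case: hf_att => [[w Hw fw] | [w Lw fw]]; exists w; [left | right]; rewrite -fw.
  have [N0 wrongN] := lam_wrong_eventually hPsig_nn hPsig_sum hmu hbeta w_wrong.
  exists N0.+1, (P w * (2 / 25)); split=> //; split; first by rewrite mulr_gt0.
  move=> N /ltnW /wrongN.
  exact: fidelity_le hP_pos hP_sum hPsig_nn hPsig_sum halpha_mu hbeta N w (2 / 25).
Qed.
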